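(* Let $(X_1,\le_1)$, $(X_2,\le_2)$ be partially ordered sets and $T:X_1\to X_2$ a map. The following are equivalent: (a) $T$ has the Mcp; (b) $T$ is monotone and for every $A\subset X_1$ and $u\in X_2$ such that $T(a)\le_2 u$ for all $a\in A$, we have $T(a)\le_2u$ for all $a\in\widehat A$; (c) $T$ is monotone and $T(\overline A)\subset\overline{T(A)}$ for every $A\subset X_1$; (d) $T(\widehat A)\subset\widehat{T(A)}$ for every $A\subset X_1$; (e) for every $A\subset X_1$ having a tip, the set $T(A)$ has a tip and $T({\sf tip}\,A)={\sf tip}\,T(A)$.
   Context: Let $(X,\le)$ be a partially ordered set. A subset $D\subset X$ is directed if every finite subset of $D$ (including the empty one) has an upper bound in $D$; in particular directed sets are nonempty. $A\subset X$ is a lower set if $x\in A$ and $y\le x$ imply $y\in A$. A subset $A\subset X$ is directed-sup-closed if the supremum of every directed $D\subset A$ which has a supremum in $X$ belongs to $A$. For $A\subset X$, $\overline A$ is the smallest directed-sup-closed subset of $X$ containing $A$, and $\widehat A$ is the smallest subset of $X$ containing $A$ which is both a lower set and directed-sup-closed (closures in $X_1$ resp. $X_2$ as appropriate). $A$ has a tip if $\overline A$ has a maximum; this maximum is denoted ${\sf tip}\,A$. A map $T:X_1\to X_2$ between partially ordered sets has the Monotone Convergence Property (Mcp) if for every directed $D\subset X_1$ having a supremum, $T(D)$ has a supremum and $T(\sup D)=\sup T(D)$. *)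

From mathcomp Require Import all_boot all_order.
Set Implicit Arguments. Unset Strict Implicit. Unset Printing Implicit Defensive.
Import Order.TTheory.
Local Open Scope order_scope.

Section PosetDefs.
Context {d : Order.disp_t} {X : porderType d}.

(* every finite subset (given as a list, possibly empty) of D has an upper bound in D *)
Definition directed (D : X -> Prop) : Prop :=
  forall s : seq X, (forall x, x \in s -> D x) ->
    exists2 u, D u & forall x, x \in s -> x <= u.

Definition is_sup (D : X -> Prop) (s : X) : Prop :=
  (forall x, D x -> x <= s) /\ (forall u, (forall x, D x -> x <= u) -> s <= u).

Definition lower_set (A : X -> Prop) : Prop :=
  forall x y, A x -> y <= x -> A y.

Definition dsup_closed (A : X -> Prop) : Prop :=
  forall D : X -> Prop, (forall x, D x -> A x) -> directed D ->
    forall s, is_sup D s -> A s.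

(* \overline A : smallest directed-sup-closed set containing A *)
Definition dclos (A : X -> Prop) : X -> Prop :=
  fun x => forall B : X -> Prop, dsup_closed B -> (forall y, A y -> B y) -> B x.

(* \widehat A : smallest directed-sup-closed lower set containing A *)
Definition hclos (A : X -> Prop) : X -> Prop :=
  fun x => forall B : X -> Prop, lower_set B -> dsup_closed B ->
    (forall y, A y -> B y) -> B x.

(* t = tip A, i.e. t is the maximum of \overline A *)
Definition is_tip (A : X -> Prop) (t : X) : Prop :=
  dclos A t /\ forall x, dclos A x -> x <= t.

Definition has_tip (A : X -> Prop) : Prop := exists t, is_tip A t.

End PosetDefs.

Definition img {T U : Type} (f : T -> U) (A : T -> Prop) : U -> Prop :=
  fun y => exists2 x, A x & f x = y.

Section MapDefs.
Context {d1 d2 : Order.disp_t} {X1 : porderType d1} {X2 : porderType d2}.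

Definition monotone (T : X1 -> X2) : Prop := forall x y, x <= y -> T x <= T y.

Definition Mcp (T : X1 -> X2) : Prop :=
  forall D : X1 -> Prop, directed D -> forall s, is_sup D s ->
    exists2 s', is_sup (img T D) s' & T s = s'.

End MapDefs.

(* For a map with the
   Mcp, the preimage of a directed-sup-closed set is again directed-sup-closed
   (and the preimage of a lower set is a lower set, the map being monotone),
   so the closures of A are mapped into the corresponding closures of T(A).
   Conversely, the supremum s of a directed D lies in both closures of D and
   is the tip of D; each of (b)-(e) then forces T(s) to lie below every upper
   bound of T(D). *)

From mathcomp Require Import all_boot all_order.
Local Open Scope order_scope.
Import Order.TTheory.

Section Closures.
Context {d : Order.disp_t} {X : porderType d}.
Implicit Types (A D : X -> Prop) (s t u : X).

Lemma sub_dclos {A x} : A x -> dclos A x.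
Proof. by move=> Ax B _; apply. Qed.

Lemma dclos_dsup_closed A : dsup_closed (dclos A).
Proof. by move=> D DA Ddir s Ds B Bsup AB; apply: (Bsup D) => // x /DA; apply. Qed.

Lemma sub_hclos {A x} : A x -> hclos A x.
Proof. by move=> Ax B _ _; apply. Qed.

Lemma hclos_dsup_closed A : dsup_closed (hclos A).
Proof. by move=> D DA Ddir s Ds B Blow Bsup AB; apply: (Bsup D) => // x /DA; apply. Qed.

Lemma hclos_lower_set A : lower_set (hclos A).
Proof. by move=> x y Ax yx B Blow Bsup AB; apply: (Blow x) => //; apply: Ax. Qed.

Lemma le_dsup_closed u : dsup_closed (fun x => x <= u).
Proof. by move=> D Du _ s [_]; apply. Qed.

Lemma le_lower_set u : lower_set (fun x => x <= u).
Proof. by move=> x y xu yx; apply: le_trans xu. Qed.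

Lemma dclos_ub {A u} : (forall x, A x -> x <= u) -> forall x, dclos A x -> x <= u.
Proof. by move=> Au x Ax; apply: (Ax (fun x => x <= u)); [apply: le_dsup_closed | apply: Au]. Qed.

Lemma hclos_ub {A u} : (forall x, A x -> x <= u) -> forall x, hclos A x -> x <= u.
Proof.
move=> Au x Ax; apply: (Ax (fun x => x <= u)).
- exact: le_lower_set.
- exact: le_dsup_closed.
- exact: Au.
Qed.

Lemma is_sup_dclos {D} : directed D -> forall s, is_sup D s -> dclos D s.
Proof. exact: (@dclos_dsup_closed D D (@sub_dclos D)). Qed.

Lemma is_sup_hclos {D} : directed D -> forall s, is_sup D s -> hclos D s.
Proof. exact: (@hclos_dsup_closed D D (@sub_hclos D)). Qed.

Lemma is_tip_is_sup {A t} : is_tip A t -> is_sup A t.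
Proof.
move=> [At tmax]; split=> [x /sub_dclos/tmax // | u Au].
exact: dclos_ub Au t At.
Qed.

Lemma directed_is_sup_tip {D s} : directed D -> is_sup D s -> is_tip D s.
Proof.
move=> Ddir Ds; split; first exact: is_sup_dclos.
exact: dclos_ub Ds.1.
Qed.

End Closures.

Section MapProperties.
Context {d1 d2 : Order.disp_t} {X1 : porderType d1} {X2 : porderType d2}.
Variable T : X1 -> X2.
Implicit Types (A D : X1 -> Prop) (s t : X1) (u : X2).

Lemma img_directed {D} : monotone T -> directed D -> directed (img T D).
Proof.
move=> monoT Ddir; elim=> [|y s IHs] sD.
  have [x Dx _] : exists2 x, D x & forall z, z \in [::] -> z <= x.
    by apply: Ddir => z; rewrite in_nil.
  by exists (T x) => //; exists x.
have [|_ [x0 Dx0 <-] x0ub] := IHs; first by move=> z zs; apply: sD; rewrite inE zs orbT.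
have [x Dx <-] := sD y (mem_head _ _).
have [v Dv vub] : exists2 v, D v & forall z, z \in [:: x; x0] -> z <= v.
  by apply: Ddir => z; rewrite !inE => /orP[] /eqP->.
exists (T v); first by exists v.
move=> z; rewrite inE => /orP[/eqP-> | zs].
  by apply: monoT; apply: vub; rewrite mem_head.
by apply: le_trans (x0ub z zs) _; apply: monoT; apply: vub; rewrite !inE eqxx orbT.
Qed.

Lemma Mcp_monotone : Mcp T -> monotone T.
Proof.
move=> mcpT x y xy.
pose D z := z = x \/ z = y.
have Dy : is_sup D y by split=> [z [->|->] // | u]; apply; right.
have Ddir : directed D by move=> s sD; exists y => [|z /sD]; [right | apply: Dy.1].
have [s' [Tub _] ->] := mcpT D Ddir y Dy.
by apply: Tub; exists x => //; left.
Qed.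

Lemma Mcp_preim_dsup_closed {B : X2 -> Prop} :
  Mcp T -> dsup_closed B -> dsup_closed (B \o T).
Proof.
move=> mcpT Bsup D DB Ddir s Ds.
have [s' TDs Ts] := mcpT D Ddir s Ds; rewrite /= Ts.
apply: (Bsup (img T D)) TDs => [_ [x Dx <-] | ]; first exact: DB.
exact: img_directed (Mcp_monotone mcpT) Ddir.
Qed.

Lemma monotone_preim_lower_set {B : X2 -> Prop} :
  monotone T -> lower_set B -> lower_set (B \o T).
Proof. by move=> monoT Blow x y Bx yx; apply: (Blow (T x)) => //; apply: monoT. Qed.

Lemma Mcp_hclos_ub {A u} :
  Mcp T -> (forall a, A a -> T a <= u) -> forall a, hclos A a -> T a <= u.
Proof.
move=> mcpT Au a Aa; apply: (Aa ((fun v => v <= u) \o T)) => //.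
  exact: monotone_preim_lower_set (Mcp_monotone mcpT) (le_lower_set u).
exact: Mcp_preim_dsup_closed (le_dsup_closed u).
Qed.

Lemma Mcp_img_dclos {A y} : Mcp T -> img T (dclos A) y -> dclos (img T A) y.
Proof.
move=> mcpT [a Aa <-]; apply: (Aa (dclos (img T A) \o T)).
  exact: Mcp_preim_dsup_closed (dclos_dsup_closed _).
by move=> x Ax; apply: sub_dclos; exists x.
Qed.

Lemma Mcp_img_hclos {A y} : Mcp T -> img T (hclos A) y -> hclos (img T A) y.
Proof.
move=> mcpT [a Aa <-]; apply: (Aa (hclos (img T A) \o T)).
- exact: monotone_preim_lower_set (Mcp_monotone mcpT) (hclos_lower_set _).
- exact: Mcp_preim_dsup_closed (hclos_dsup_closed _).
- by move=> x Ax; apply: sub_hclos; exists x.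
Qed.

Lemma Mcp_is_tip {A t} : Mcp T -> is_tip A t -> is_tip (img T A) (T t).
Proof.
move=> mcpT [At tmax]; split; first by apply: (Mcp_img_dclos mcpT); exists t.
apply: dclos_ub => _ [a Aa <-].
exact: Mcp_monotone mcpT _ _ (tmax a (sub_dclos Aa)).
Qed.

Lemma monotone_ub_Mcp :
  monotone T ->
  (forall D, directed D -> forall s, is_sup D s ->
     forall u, (forall x, D x -> T x <= u) -> T s <= u) ->
  Mcp T.
Proof.
move=> monoT Tsup D Ddir s Ds; exists (T s) => //; split.
  by move=> _ [x Dx <-]; apply: monoT; apply: Ds.1.
by move=> u TDu; apply: (Tsup D Ddir s Ds) => x Dx; apply: TDu; exists x.
Qed.

Lemma hclos_ub_Mcp :
  monotone T ->
  (forall A u, (forall a, A a -> T a <= u) -> forall a, hclos A a -> T a <= u) ->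
  Mcp T.
Proof.
move=> monoT Tub; apply: monotone_ub_Mcp => // D Ddir s Ds u Du.
exact: Tub D u Du s (is_sup_hclos Ddir s Ds).
Qed.

Lemma img_dclos_Mcp :
  monotone T -> (forall A y, img T (dclos A) y -> dclos (img T A) y) -> Mcp T.
Proof.
move=> monoT Tdclos; apply: monotone_ub_Mcp => // D Ddir s Ds u Du.
apply: (dclos_ub _ _ (Tdclos D (T s) _)) => [_ [x Dx <-] | ]; first exact: Du.
by exists s => //; apply: is_sup_dclos.
Qed.

Lemma img_hclos_ub {A u} :
  (forall A y, img T (hclos A) y -> hclos (img T A) y) ->
  (forall a, A a -> T a <= u) -> forall a, hclos A a -> T a <= u.
Proof.
move=> Thclos Au a Aa; apply: (hclos_ub _ _ (Thclos A (T a) _)); last by exists a.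
by move=> _ [x Ax <-]; apply: Au.
Qed.

Lemma img_hclos_Mcp :
  (forall A y, img T (hclos A) y -> hclos (img T A) y) -> Mcp T.
Proof.
move=> Thclos; apply: hclos_ub_Mcp => [x y xy | A u]; last exact: img_hclos_ub.
apply: (img_hclos_ub (A := fun z => z = y)) => [// | _ -> //|].
exact: hclos_lower_set _ y x (sub_hclos erefl) xy.
Qed.

Lemma img_is_tip_Mcp :
  (forall A t, is_tip A t -> exists2 t', is_tip (img T A) t' & T t = t') -> Mcp T.
Proof.
move=> Ttip D Ddir s Ds.
have [t' /is_tip_is_sup TDt' ->] := Ttip D s (directed_is_sup_tip Ddir Ds).
by exists t'.
Qed.

End MapProperties.

Theorem mainTheorem2 (d1 d2 : Order.disp_t) (X1 : porderType d1) (X2 : porderType d2)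
    (T : X1 -> X2) :
  [<-> Mcp T;
       monotone T /\
         (forall (A : X1 -> Prop) (u : X2), (forall a, A a -> T a <= u) ->
            forall a, hclos A a -> T a <= u);
       monotone T /\
         (forall A : X1 -> Prop, forall y, img T (dclos A) y -> dclos (img T A) y);
       (forall A : X1 -> Prop, forall y, img T (hclos A) y -> hclos (img T A) y);
       (forall A : X1 -> Prop, has_tip A ->
          has_tip (img T A) /\
          forall t, is_tip A t -> exists2 t', is_tip (img T A) t' & T t = t')].
Proof.
tfae.
- move=> mcpT; split; first exact: Mcp_monotone.
  by move=> A u; apply: Mcp_hclos_ub.
- case=> monoT /(hclos_ub_Mcp _ monoT) mcpT.
  by split=> [|A y]; [apply: Mcp_monotone | apply: Mcp_img_dclos].
- case=> monoT /(img_dclos_Mcp _ monoT) mcpT A y.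
  exact: Mcp_img_hclos.
- move=> /img_hclos_Mcp mcpT A [t At].
  split; first by exists (T t); apply: Mcp_is_tip.
  by move=> t' At'; exists (T t') => //; apply: Mcp_is_tip.
- move=> Ttip; apply: img_is_tip_Mcp => A t At.
  by have [_] := Ttip A (ex_intro _ t At); apply.
Qed.
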